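(* Let $G$ be a $3$-edge colorable cubic graph, and let $\{G_i\}$ be a decomposition of $G$ along nontrivial $2$-edge cuts or $3$-edge cuts. Then $K'(G,3)=\prod_i K'(G_i,3)$.
   Context: Graphs are finite; multiple edges allowed, loops not. Let $G$ be cubic. For a $3$-edge cut $E_C=\{s_{11}s_{21},s_{12}s_{22},s_{13}s_{23}\}$ with the $s_{1j}$ on one side and the $s_{2j}$ on the other, let $G_1',G_2'$ be the subgraphs induced on the two sides of $G\setminus E_C$; $G_i$ is obtained from $G_i'$ by adding a new vertex $v_i$ joined to $s_{i1},s_{i2},s_{i3}$. For a $2$-edge cut $E_C=\{s_{11}s_{21},s_{12}s_{22}\}$, $G_i$ is obtained from $G_i'$ by adding the edge $s_{i1}s_{i2}$. The cut is nontrivial if both $G_1$ and $G_2$ have fewer vertices than $G$. A decomposition of $G$ along such cuts is a collection of graphs obtained from $\{G\}$ by repeatedly replacing a member by the two graphs $G_1,G_2$ arising from a nontrivial $2$- or $3$-edge cut of it. A proper $3$-edge coloring uses colors $\{1,2,3\}$ with adjacent edges colored differently; an edge-Kempe chain (colors $a\neq b$) is a connected component of the subgraph of edges colored $a$ or $b$, and an edge-Kempe switch swaps $a,b$ on one chain. $K'(G,3)$ is the number of classes of proper $3$-edge colorings under the equivalence generated by edge-Kempe switches. *)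

From mathcomp Require Import all_boot.
Set Implicit Arguments. Unset Strict Implicit. Unset Printing Implicit Defensive.

Record mgraph := MGraph {
  vert : finType;
  edge : finType;
  src : edge -> vert;
  tgt : edge -> vert }.

Section Graphs.
Variable G : mgraph.

Definition loopless : Prop := forall e : edge G, src e != tgt e.

(* degree of v (= number of incident edges, the graph being loopless) *)
Definition incident (v : vert G) : {set edge G} :=
  [set e | (src e == v) || (tgt e == v)].

Definition cubic : Prop := loopless /\ forall v : vert G, #|incident v| = 3.

Definition adjacent (e f : edge G) : bool :=
  [|| src e == src f, src e == tgt f, tgt e == src f | tgt e == tgt f].

Definition coloring := {ffun edge G -> 'I_3}.

Definition proper (c : coloring) : bool :=
  [forall e, forall f, ((e != f) && adjacent e f) ==> (c e != c f)].

Definition three_edge_colorable : Prop := exists c : coloring, proper c.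

(* edges of the (a,b)-subgraph, and adjacency inside it; the edge-Kempe chain
   containing e is the set of edges f with connect (chain_rel c a b) e f *)
Definition chain_rel (c : coloring) (a b : 'I_3) : rel (edge G) :=
  fun e f => [&& (c e == a) || (c e == b), (c f == a) || (c f == b) & adjacent e f].

Definition swap (a b x : 'I_3) : 'I_3 :=
  if x == a then b else if x == b then a else x.

Definition kempe_switch (c : coloring) (a b : 'I_3) (e : edge G) : coloring :=
  [ffun f => if connect (chain_rel c a b) e f then swap a b (c f) else c f].

Definition kempe_step (c d : coloring) : bool :=
  [exists a, exists b, exists e,
     [&& a != b, (c e == a) || (c e == b) & d == kempe_switch c a b e]].

Definition kempe_equiv : rel coloring :=
  connect (fun c d => [&& proper c, proper d & kempe_step c d || kempe_step d c]).

Definition Kprime : nat :=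
  #|[set [set d | kempe_equiv c d] | c in [set c : coloring | proper c]]|.

Definition crossing (S : {set vert G}) : {set edge G} :=
  [set e | (src e \in S) != (tgt e \in S)].

(* 3-edge cut side S: G_1 = G[S] plus a new vertex (None) joined to the ends
   in S of the cut edges (i.e. the complement of S contracted to one vertex). *)
Definition split3_graph (S : {set vert G}) : mgraph :=
  @MGraph (Finite.clone (option {x : vert G | x \in S}) _)
          (Finite.clone ({e : edge G | (src e \in S) || (tgt e \in S)}) _)
          (fun e => insub (src (val e))) (fun e => insub (tgt (val e))).

(* 2-edge cut side S: G_1 = G[S] plus a new edge (None) joining x1 and x2. *)
Definition split2_graph (S : {set vert G}) (x1 x2 : {x : vert G | x \in S}) : mgraph :=
  @MGraph (Finite.clone ({x : vert G | x \in S}) _)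
          (Finite.clone (option {e : edge G | (src e \in S) && (tgt e \in S)}) _)
          (fun e => if e is Some e' then Sub (src (val e')) (proj1 (andP (valP e'))) else x1)
          (fun e => if e is Some e' then Sub (tgt (val e')) (proj2 (andP (valP e'))) else x2).

End Graphs.

Definition cut3_split (H H1 H2 : mgraph) : Prop :=
  exists S : {set vert H},
    #|crossing S| = 3 /\ H1 = split3_graph S /\ H2 = split3_graph (~: S).

Definition is_end (G : mgraph) (e : edge G) (v : vert G) : bool :=
  (src e == v) || (tgt e == v).

Definition cut2_split (H H1 H2 : mgraph) : Prop :=
  exists (S : {set vert H}) (e1 e2 : edge H)
         (x1 x2 : {x : vert H | x \in S}) (y1 y2 : {x : vert H | x \in ~: S}),
    [/\ e1 != e2, crossing S = [set e1; e2],
        is_end e1 (val x1) && is_end e2 (val x2),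
        is_end e1 (val y1) && is_end e2 (val y2) &
        H1 = split2_graph x1 x2 /\ H2 = split2_graph y1 y2].

Definition nontrivial_split (H H1 H2 : mgraph) : Prop :=
  (cut2_split H H1 H2 \/ cut3_split H H1 H2) /\
  #|vert H1| < #|vert H| /\ #|vert H2| < #|vert H|.

Inductive decomposition (G : mgraph) : seq mgraph -> Prop :=
| decomp_base : decomposition G [:: G]
| decomp_step (L1 L2 : seq mgraph) (H H1 H2 : mgraph) :
    decomposition G (L1 ++ H :: L2) -> nontrivial_split H H1 H2 ->
    decomposition G (L1 ++ H1 :: H2 :: L2).

(* A proper 3-edge colouring of a cubic graph uses all three colours at every
   vertex, so the number of a-coloured edges leaving a vertex set S has the
   parity of |S|.  Hence the edges of a 3-edge cut get distinct colours and
   those of a 2-edge cut the same colour, and the proper colourings of G are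
   exactly the gluings of proper colourings of G1 and G2 that agree on the cut.
   A Kempe switch on G changes each side by exchanging two colours on some
   edges, which is a composition of Kempe switches there, so
   [c] |-> ([c|G1], [c|G2]) is well defined on Kempe classes.  It is onto
   because global colour swaps on G2 align any colouring with a given one on
   the cut.  It is one-to-one because a Kempe switch on G1 lifts to G at the
   cost of a global colour permutation on G2; lifting the G1-moves and then the
   G2-moves leaves a colour permutation of the G1 side fixing a cut colour,
   i.e. a swap, which is again Kempe-trivial. *)

From Pilot Require Import Defs.
From mathcomp Require Import all_boot zify.
Set Implicit Arguments. Unset Strict Implicit. Unset Printing Implicit Defensive.

(* fintype also exports a [proper] (strict set inclusion). *)
Local Notation proper := Pilot.Defs.proper.

(** * Colour exchanges and Kempe switches *)

Lemma neq_sym (T : eqType) (x y : T) : x != y -> y != x.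
Proof. by rewrite eq_sym. Qed.

Ltac case_ord3 := case => [[|[|[|//]]] ?].
Ltac ord3_done := move=> *; (done || (apply/eqP; done)).

(* [d] arises from [c] by exchanging a and b on some set of edges iff
   [swap_or_id a b (c e) (d e)] holds for every edge [e]. *)
Definition swap_or_id (a b x y : 'I_3) : bool :=
  (y == x) || (((x == a) || (x == b)) && (y == swap a b x)).

Lemma swapK a b : involutive (swap a b).
Proof. by move=> x; move: a b x; do 3 case_ord3; ord3_done. Qed.

Lemma swap_inj a b : injective (swap a b).
Proof. exact: can_inj (swapK a b). Qed.

Lemma swap_id a b x : x != a -> x != b -> swap a b x = x.
Proof. by move: a b x; do 3 case_ord3; ord3_done. Qed.

Lemma swap_in2 a b x : (x == a) || (x == b) -> (swap a b x == a) || (swap a b x == b).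
Proof. by move: a b x; do 3 case_ord3; ord3_done. Qed.

Lemma swap_other a b x y : a != b -> (x == a) || (x == b) -> (y == a) || (y == b) ->
  x != y -> swap a b x = y.
Proof. by move: a b x y; do 4 case_ord3; ord3_done. Qed.

Lemma swap_or_idC a b x y : swap_or_id a b x y = swap_or_id a b y x.
Proof. by move: a b x y; do 4 case_ord3; ord3_done. Qed.

Lemma swap_or_id_refl a b x : swap_or_id a b x x.
Proof. by rewrite /swap_or_id eqxx. Qed.

Lemma swap_or_id_swap a b x : swap_or_id a b x (swap a b x).
Proof. by move: a b x; do 3 case_ord3; ord3_done. Qed.

Lemma swap_or_id_neq a b x y : swap_or_id a b x y -> x != y ->
  ((x == a) || (x == b)) && (y == swap a b x).
Proof. by rewrite /swap_or_id eq_sym => /orP[->|]. Qed.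

Lemma ord3_cases (a b c x : 'I_3) : a != b -> a != c -> b != c ->
  [|| x == a, x == b | x == c].
Proof. by move: a b c x; do 4 case_ord3; ord3_done. Qed.

Lemma perm3_fix_swap (r : 'I_3 -> 'I_3) y : injective r -> r y = y ->
  exists a b, a != b /\ forall w, swap_or_id a b w (r w).
Proof.
move=> r_inj ry.
case: (pickP (fun z => r z != z)) => [z rz | r_id]; last first.
  exists ord0, (@Ordinal 3 1 isT); split => // w.
  by move: (r_id w) => /negbFE/eqP ->; apply: swap_or_id_refl.
have yz : y != z by apply: contraNneq rz => <-; rewrite ry.
have yrz : y != r z by rewrite -{1}ry (inj_eq r_inj).
have zrz : z != r z by rewrite eq_sym.
have rrz : r (r z) = z.
  case/or3P: (ord3_cases (r (r z)) yz yrz zrz) => /eqP // E.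
  - by move: yrz; rewrite (r_inj _ _ (etrans E (esym ry))) eqxx.
  - by move/r_inj: E => E; move: zrz; rewrite E eqxx.
exists z, (r z); split => // w.
case/or3P: (ord3_cases w yz yrz zrz) => /eqP ->.
- by rewrite ry swap_or_id_refl.
- by rewrite /swap_or_id /swap !eqxx orbT.
- by rewrite rrz /swap_or_id /swap (eq_sym (r z) z) (negbTE zrz) !eqxx orbT.
Qed.

Section Kempe.
Variable G : mgraph.
Implicit Types (c d : coloring G) (e f : edge G) (a b : 'I_3).

Lemma adjacentC e f : adjacent e f = adjacent f e.
Proof.
by apply/idP/idP; rewrite /adjacent => /or4P [] /eqP ->; rewrite eqxx ?orbT.
Qed.

Lemma adjacent_is_end e f p : is_end e p -> is_end f p -> adjacent e f.
Proof. by rewrite /adjacent /is_end => /orP[]/eqP-> /orP[]/eqP->; rewrite eqxx ?orbT. Qed.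

Lemma properP c :
  reflect (forall e f, e != f -> adjacent e f -> c e != c f) (proper c).
Proof.
apply: (iffP forallP) => [Pc e f nef aef | Pc e].
  by move/forallP: (Pc e) => /(_ f); rewrite nef aef.
by apply/forallP => f; apply/implyP => /andP[]; apply: Pc.
Qed.

Definition kempe_rel : rel (coloring G) :=
  fun c d => [&& proper c, proper d & kempe_step c d || kempe_step d c].

Lemma kempe_rel_sym : symmetric kempe_rel.
Proof. by move=> c d; rewrite /kempe_rel andbCA orbC. Qed.

Lemma kempe_refl c : kempe_equiv c c.
Proof. exact: connect0. Qed.

Lemma kempe_sym c d : kempe_equiv c d = kempe_equiv d c.
Proof. exact: (sym_connect_sym kempe_rel_sym). Qed.

Lemma kempe_trans c1 c2 c3 :
  kempe_equiv c1 c2 -> kempe_equiv c2 c3 -> kempe_equiv c1 c3.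
Proof. exact: connect_trans. Qed.

Lemma kempe_chain_colors c a b e f : (c e == a) || (c e == b) ->
  connect (chain_rel c a b) e f -> (c f == a) || (c f == b).
Proof.
move=> ce /connectP[p p_path ->]; elim/last_ind: p p_path => // p x _.
by rewrite rcons_path last_rcons => /andP[_ /and3P[_ ->]].
Qed.

Lemma kempe_switch_proper c a b e : proper c -> (c e == a) || (c e == b) ->
  proper (kempe_switch c a b e).
Proof.
move=> /properP Pc ce; apply/properP => x y nxy axy; rewrite !ffunE.
have chain_adj u v : connect (chain_rel c a b) e u -> adjacent u v ->
    (c v == a) || (c v == b) -> connect (chain_rel c a b) e v.
  move=> Ku auv cv; have cu := kempe_chain_colors ce Ku.
  by apply: connect_trans Ku (connect1 _); rewrite /chain_rel cu cv auv.
case Kx: (connect _ e x); case Ky: (connect _ e y).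
- by rewrite (inj_eq (@swap_inj a b)) Pc.
- case cy: ((c y == a) || (c y == b)); first by rewrite (chain_adj x y) in Ky.
  by apply: contraFneq cy => <-; apply: swap_in2 (kempe_chain_colors ce Kx).
- case cx: ((c x == a) || (c x == b)).
    by rewrite (chain_adj y x) // adjacentC in Kx.
  by apply: contraFneq cx => ->; apply: swap_in2 (kempe_chain_colors ce Ky).
- exact: Pc.
Qed.

Lemma kempe_step_swap_or_id c d : kempe_step c d || kempe_step d c ->
  exists a b, a != b /\ forall f, swap_or_id a b (c f) (d f).
Proof.
suff step u v : kempe_step u v ->
    exists a b, a != b /\ forall f, swap_or_id a b (u f) (v f).
  case/orP => /step [a [b [nab uv]]]; exists a, b; split => // f.
  by rewrite swap_or_idC.
case/existsP=> a /existsP[b /existsP[e /and3P[nab ue /eqP ->]]].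
exists a, b; split => // f; rewrite ffunE.
case K: connect; last exact: swap_or_id_refl.
by rewrite /swap_or_id (kempe_chain_colors ue K) eqxx orbT.
Qed.

Section SwapOrId.
Variables (a b : 'I_3) (d : coloring G).
Hypotheses (nab : a != b) (Pd : proper d).

(* Where [c] and [d] differ they differ by the (a,b)-swap, so the set of such
   edges is a union of (a,b)-Kempe chains of [c]. *)
Lemma swap_or_id_diff_closed c : proper c -> (forall f, swap_or_id a b (c f) (d f)) ->
  forall e f, c e != d e -> connect (chain_rel c a b) e f -> c f != d f.
Proof.
move=> Pc cd e f de K.
have diff_adj x y : (c x == a) || (c x == b) -> (c y == a) || (c y == b) ->
    adjacent x y -> c x != d x -> c y != d y.
  move=> cx cy axy dx; have [<- //|nxy] := eqVneq x y.
  apply: contraTneq (properP d Pd x y nxy axy) => dy.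
  have /andP[_ /eqP ->] := swap_or_id_neq (cd x) dx.
  by rewrite -dy (swap_other nab cx cy (properP c Pc x y nxy axy)) eqxx.
suff : (e \in [pred g | c g != d g]) = (f \in [pred g | c g != d g]).
  by rewrite !inE de => <-.
apply: closed_connect K => x y /and3P[cx cy axy].
by apply/idP/idP; apply: diff_adj; rewrite // adjacentC.
Qed.

Lemma swap_or_id_kempe c : proper c -> (forall f, swap_or_id a b (c f) (d f)) ->
  kempe_equiv c d.
Proof.
have [n] := ubnP #|[set f | c f != d f]|; elim: n c => // n IHn c.
move=> card_diff Pc cd.
case: (pickP [pred f | c f != d f]) => [e /= de | c_eq_d]; last first.
  suff -> : c = d by apply: kempe_refl.
  by apply/ffunP => f; move: (c_eq_d f) => /negbFE/eqP.
have [ce _] := andP (swap_or_id_neq (cd e) de).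
have on_chain := swap_or_id_diff_closed Pc cd de.
set c' := kempe_switch c a b e.
have c'd f : swap_or_id a b (c' f) (d f).
  rewrite /c' ffunE; case K: connect; last exact: cd.
  have /andP[_ /eqP ->] := swap_or_id_neq (cd f) (on_chain f K).
  exact: swap_or_id_refl.
apply: (@kempe_trans _ c').
  apply: connect1; rewrite /kempe_rel Pc kempe_switch_proper //=.
  apply/orP; left; apply/existsP; exists a; apply/existsP; exists b.
  by apply/existsP; exists e; rewrite nab ce eqxx.
apply: IHn (kempe_switch_proper Pc ce) c'd.
move: card_diff; rewrite (cardsD1 e) inE de add1n ltnS; apply: leq_ltn_trans.
apply/subset_leq_card/subsetP => f; rewrite !inE /c' ffunE.
case K: connect.
  have /andP[_ /eqP ->] := swap_or_id_neq (cd f) (on_chain f K).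
  by rewrite eqxx.
by move=> ->; rewrite andbT; apply: contraFneq K => ->; apply: connect0.
Qed.

End SwapOrId.
End Kempe.

(** * Colour classes across an edge cut *)

Lemma sum_eq_mem (T : finType) (A : {pred T}) x : \sum_(v in A) (x == v) = (x \in A).
Proof.
rewrite big_mkcond (bigD1 x) //= eqxx big1 ?addn0; first by case: (x \in A).
by move=> v; rewrite eq_sym => /negbTE ->; case: (v \in A).
Qed.

Lemma card_set_sum (T : finType) (A : {pred T}) (P : pred T) :
  #|[set x in A | P x]| = \sum_(x | P x) (x \in A).
Proof.
rewrite -sum1_card big_mkcond [RHS]big_mkcond; apply: eq_bigr => x _.
by rewrite inE; case: (P x); case: (x \in A).
Qed.

Lemma odd_sum_ord3 (n : 'I_3 -> nat) p : (forall a, odd (n a) = p) ->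
  odd (\sum_a n a) = p.
Proof. by move=> odd_n; rewrite !big_ord_recr big_ord0 /= !oddD !odd_n; case: (p). Qed.

Lemma sum_ord3_ge (n : 'I_3 -> nat) a : (forall b, 0 < n b) -> n a + 2 <= \sum_b n b.
Proof.
move=> n_gt0; rewrite (bigD1 a) //= leq_add2l.
apply: (@leq_trans (\sum_(b | b != a) 1)); last exact: leq_sum.
by rewrite sum1_card cardC1 card_ord.
Qed.

Section Parity.
Variable G : mgraph.
Hypothesis G_cubic : cubic G.
Variable c : coloring G.
Hypothesis Pc : proper c.

Lemma card_incident_color v a : #|[set e in incident v | c e == a]| = 1.
Proof.
have [_ deg3] := G_cubic.
have adj e f : e \in incident v -> f \in incident v -> adjacent e f.
  by rewrite !inE; apply: adjacent_is_end.
have c_inj : {in incident v &, injective c}.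
  move=> e f ev fv; apply: contra_eq => nef.
  exact: properP Pc e f nef (adj e f ev fv).
have c_onto : c @: incident v = [set: 'I_3].
  apply/eqP; rewrite eqEcard subsetT cardsT card_ord card_in_imset //.
  by rewrite deg3.
apply/eqP; rewrite eqn_leq; apply/andP; split.
  apply/card_le1_eqP => e f; rewrite !inE => /andP[ev /eqP ea] /andP[fv /eqP fa].
  by apply: c_inj; rewrite ?inE ?ea ?fa.
have /imsetP[e ev ea] : a \in c @: incident v by rewrite c_onto inE.
by apply/card_gt0P; exists e; rewrite inE ev ea eqxx.
Qed.

Lemma sum_incident (S : {set vert G}) e :
  \sum_(v in S) (e \in incident v) = (src e \in S) + (tgt e \in S).
Proof.
have [loopless_G _] := G_cubic.
rewrite -!sum_eq_mem -big_split /=; apply: eq_bigr => v _; rewrite inE.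
by case: (src e =P v) (tgt e =P v) (loopless_G e) => [->|_] [->|_]; rewrite ?eqxx.
Qed.

(* Each vertex of S meets exactly one edge of colour a, so |S| counts the
   a-edges inside S twice and the crossing a-edges once. *)
Lemma odd_crossing_color (S : {set vert G}) a :
  odd #|[set e in crossing S | c e == a]| = odd #|S|.
Proof.
have -> : #|S| = \sum_(e | c e == a) ((src e \in S) + (tgt e \in S)).
  under eq_bigr => e _ do rewrite -sum_incident.
  rewrite exchange_big -sum1_card; apply: eq_bigr => v _.
  by rewrite -card_set_sum card_incident_color.
rewrite card_set_sum.
apply: (big_ind2 (fun m n => odd m = odd n)) => // [m1 n1 m2 n2 odd1 odd2|e _].
  by rewrite !oddD odd1 odd2.
by rewrite inE; case: (src e \in S); case: (tgt e \in S).
Qed.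

End Parity.

Lemma sum_card_color (T : finType) (A : {pred T}) (c : T -> 'I_3) :
  \sum_a #|[set x in A | c x == a]| = #|A|.
Proof.
rewrite -[RHS]sum1_card (partition_big c xpredT) //=; apply: eq_bigr => a _.
by rewrite sum1_card cardsE.
Qed.

Section CutColors.
Variable G : mgraph.
Hypothesis G_cubic : cubic G.
Variables (c : coloring G) (S : {set vert G}).
Hypothesis Pc : proper c.

Let n a := #|[set e in crossing S | c e == a]|.

Let odd_n a : odd (n a) = odd #|crossing S|.
Proof.
have odd_S b : odd (n b) = odd #|S| by apply: odd_crossing_color.
by rewrite odd_S -(odd_sum_ord3 odd_S) sum_card_color.
Qed.

Lemma cut3_color_inj e f : #|crossing S| = 3 ->
  e \in crossing S -> f \in crossing S -> e != f -> c e != c f.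
Proof.
move=> cut3 eS fS nef; apply/eqP => cef.
have n_gt0 b : 0 < n b by apply: odd_gt0; rewrite odd_n cut3.
have : 2 <= n (c e).
  apply: (@leq_trans #|[set e; f]|); first by rewrite cards2 nef.
  apply/subset_leq_card/subsetP => g.
  by case/set2P => ->; rewrite inE ?eS ?fS cef eqxx.
by have := sum_ord3_ge (c e) n_gt0; rewrite /n sum_card_color cut3; lia.
Qed.

Lemma cut2_color_eq e1 e2 : crossing S = [set e1; e2] -> e1 != e2 -> c e1 = c e2.
Proof.
move=> cut2 ne12.
have e1S : e1 \in crossing S by rewrite cut2 !inE eqxx.
have : [set e in crossing S | c e == c e1] = crossing S.
  apply/eqP; rewrite eqEcard; apply/andP; split.
    by apply/subsetP => e; rewrite inE => /andP[].
  have pos : 0 < n (c e1) by apply/card_gt0P; exists e1; rewrite inE e1S eqxx.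
  have card2 : #|crossing S| = 2 by rewrite cut2 cards2 ne12.
  move: pos (odd_n (c e1)); rewrite card2 /n.
  by case: #|_| => [|[|]].
have e2S : e2 \in crossing S by rewrite cut2 !inE eqxx orbT.
by move/setP => /(_ e2); rewrite e2S in_set e2S => /eqP.
Qed.

End CutColors.

(** * Gluing two graphs along an interface *)

Lemma card_imset_kernel (T U V : finType) (A : {set T}) (f : T -> U) (g : T -> V) :
  {in A &, forall x y, f x = f y <-> g x = g y} -> #|f @: A| = #|g @: A|.
Proof.
move=> fg; pose h x := (f x, g x).
have card_proj (W : finType) (p : U * V -> W) (k : T -> W) : k =1 p \o h ->
    {in A &, forall x y, k x = k y -> h x = h y} -> #|k @: A| = #|h @: A|.
  move=> kE k_inj; rewrite (eq_imset _ kE) imset_comp.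
  apply: card_in_imset => _ _ /imsetP[x Ax ->] /imsetP[y Ay ->] pxy.
  by apply: k_inj; rewrite // !kE.
rewrite (card_proj _ fst f) // ?(card_proj _ snd g) // => x y Ax Ay.
  by move=> gxy; rewrite /h gxy; move/(fg x y Ax Ay): gxy => ->.
by move=> fxy; rewrite /h fxy; move/(fg x y Ax Ay): fxy => ->.
Qed.

Definition pullback (G G' : mgraph) (phi : edge G' -> edge G) (c : coloring G) :
  coloring G' := [ffun e => c (phi e)].

Definition recolor (G : mgraph) (t : 'I_3 -> 'I_3) (c : coloring G) : coloring G :=
  [ffun e => t (c e)].

Definition pairwise_adjacent (G : mgraph) (I : eqType) (io : I -> edge G) : Prop :=
  forall i j, i != j -> (io i != io j) && adjacent (io i) (io j).

Definition kempe_class (G : mgraph) (c : coloring G) : {set coloring G} :=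
  [set d | kempe_equiv c d].

Lemma kempe_classP (G : mgraph) (c d : coloring G) :
  kempe_class c = kempe_class d <-> kempe_equiv c d.
Proof.
split => [cd | cd].
  have : d \in kempe_class d by rewrite inE kempe_refl.
  by rewrite -cd inE.
apply/setP => x; rewrite !inE; apply/idP/idP; last exact: kempe_trans.
by apply: kempe_trans; rewrite kempe_sym.
Qed.

Lemma recolor_proper (G : mgraph) t (c : coloring G) :
  injective t -> proper c -> proper (recolor t c).
Proof.
move=> t_inj /properP Pc; apply/properP => e f nef aef.
by rewrite !ffunE (inj_eq t_inj) Pc.
Qed.

Lemma recolor_swap_kempe (G : mgraph) a b (c : coloring G) :
  a != b -> proper c -> kempe_equiv c (recolor (swap a b) c).
Proof.
move=> nab Pc.
apply: swap_or_id_kempe nab (recolor_proper (@swap_inj a b) Pc) _ Pc _ => e.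
by rewrite ffunE swap_or_id_swap.
Qed.

Lemma pullback_kempe (G G' : mgraph) (phi : edge G' -> edge G) :
  (forall c, proper c -> proper (pullback phi c)) ->
  forall c d, kempe_equiv c d -> kempe_equiv (pullback phi c) (pullback phi d).
Proof.
move=> phi_proper c d /connectP[p]; elim: p c => [|x p IHp] c /=.
  by move=> _ ->; apply: kempe_refl.
case/andP=> /and3P[Pc Px cx] x_p d_last; apply: kempe_trans (IHp _ x_p d_last).
have [a [b [nab cx_ab]]] := kempe_step_swap_or_id cx.
apply: swap_or_id_kempe nab (phi_proper _ Px) _ (phi_proper _ Pc) _ => f.
by rewrite !ffunE.
Qed.

(* Pairwise adjacent edges carry distinct colours, so exchanging a and b on
   some edges changes either all or none of their a/b-coloured members. *)
Lemma pairwise_adjacent_swap_or_id (G : mgraph) (I : finType) (io : I -> edge G)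
    (c x : coloring G) a b :
  pairwise_adjacent io -> proper c -> proper x -> a != b ->
  (forall f, swap_or_id a b (c f) (x f)) ->
  exists s, [/\ injective s, forall y, swap_or_id a b y (s y) &
              forall i, x (io i) = s (c (io i))].
Proof.
move=> io_adj Pc Px nab cx.
case: (pickP (fun i => x (io i) != c (io i))) => [i0 /= x_i0 | x_io]; last first.
  exists id; split => // [|i]; first exact: swap_or_id_refl.
  by move: (x_io i) => /negbFE/eqP.
have /andP[c_i0 /eqP x_i0E] := swap_or_id_neq (cx (io i0)) (neq_sym x_i0).
exists (swap a b); split => [||i]; [exact: swap_inj | exact: swap_or_id_swap |].
have [-> //|ni] := eqVneq i i0.
have /andP[nio aio] := io_adj i i0 ni.
case: (eqVneq (x (io i)) (c (io i))) => [x_i | x_i]; last first.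
  by have /andP[_ /eqP] := swap_or_id_neq (cx (io i)) (neq_sym x_i).
case c_i : ((c (io i) == a) || (c (io i) == b)); last first.
  by rewrite x_i swap_id //; apply: contraFneq c_i => ->; rewrite eqxx ?orbT.
have c_ne := properP c Pc _ _ nio aio.
have := properP x Px _ _ nio aio.
by rewrite x_i x_i0E (swap_other nab c_i0 c_i) ?eqxx // eq_sym.
Qed.

Section Lift.
Variables (G G1 G2 : mgraph) (phi1 : edge G1 -> edge G) (phi2 : edge G2 -> edge G).
Variables (I : finType) (iota1 : I -> edge G1) (iota2 : I -> edge G2).
Hypothesis pullback1_proper : forall c, proper c -> proper (pullback phi1 c).
Hypothesis pullback2_proper : forall c, proper c -> proper (pullback phi2 c).
Hypothesis interface_agree :
  forall c, proper c -> forall i, c (phi1 (iota1 i)) = c (phi2 (iota2 i)).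
Hypothesis glue : forall c1 c2, proper c1 -> proper c2 ->
  (forall i, c1 (iota1 i) = c2 (iota2 i)) ->
  exists c, [/\ proper c, pullback phi1 c = c1 & pullback phi2 c = c2].
Hypothesis phi_cover : forall e, (exists e1, e = phi1 e1) \/ (exists e2, e = phi2 e2).
Hypothesis iota1_adjacent : pairwise_adjacent iota1.

(* A swap-or-identity on the G1 side is matched on the G2 side by recolouring
   with the swap or the identity, whichever the interface colours require. *)
Lemma lift_swap_or_id c x a b : proper c -> proper x -> a != b ->
  (forall f, swap_or_id a b (pullback phi1 c f) (x f)) ->
  exists c', [/\ kempe_equiv c c', proper c', pullback phi1 c' = x &
     exists t, injective t /\ pullback phi2 c' = recolor t (pullback phi2 c)].
Proof.
move=> Pc Px nab cx.
have [s [s_inj s_ab x_io]] :=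
  pairwise_adjacent_swap_or_id iota1_adjacent (pullback1_proper Pc) Px nab cx.
have Ps : proper (recolor s (pullback phi2 c)).
  exact: recolor_proper s_inj (pullback2_proper Pc).
have [c' [Pc' c'1 c'2]] : exists c', [/\ proper c', pullback phi1 c' = x &
    pullback phi2 c' = recolor s (pullback phi2 c)].
  by apply: glue Px Ps _ => i; rewrite x_io !ffunE interface_agree.
exists c'; split => //; last by exists s.
apply: swap_or_id_kempe nab Pc' _ Pc _ => e.
case: (phi_cover e) => [[e1 ->]|[e2 ->]].
  by move: (cx e1); rewrite -c'1 !ffunE.
by have := congr1 (fun g : coloring G2 => g e2) c'2; rewrite !ffunE => ->.
Qed.

Lemma lift_kempe c y : proper c -> kempe_equiv (pullback phi1 c) y ->
  exists c', [/\ kempe_equiv c c', proper c', pullback phi1 c' = y &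
     exists t, injective t /\ pullback phi2 c' = recolor t (pullback phi2 c)].
Proof.
move=> + /connectP[p]; elim: p c => [|x p IHp] c /= Pc.
  move=> _ ->; exists c; split => //; first exact: kempe_refl.
  by exists id; split => //; apply/ffunP => e; rewrite !ffunE.
case/andP=> /and3P[_ Px cx] x_p y_last.
have [a [b [nab cx_ab]]] := kempe_step_swap_or_id cx.
have [c1 [cc1 Pc1 c1x [t [t_inj c1t]]]] := lift_swap_or_id Pc Px nab cx_ab.
rewrite -c1x in x_p y_last.
have [c2 [c1c2 Pc2 c2y [t' [t'_inj c2t']]]] := IHp c1 Pc1 x_p y_last.
exists c2; split => //; first exact: kempe_trans cc1 c1c2.
exists (t' \o t); split; first exact: inj_comp.
by rewrite c2t' c1t; apply/ffunP => e; rewrite !ffunE.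
Qed.

End Lift.

Section Gluing.
Variables (G G1 G2 : mgraph) (phi1 : edge G1 -> edge G) (phi2 : edge G2 -> edge G).
Variables (I : finType) (iota1 : I -> edge G1) (iota2 : I -> edge G2) (i0 : I).
Hypothesis pullback1_proper : forall c, proper c -> proper (pullback phi1 c).
Hypothesis pullback2_proper : forall c, proper c -> proper (pullback phi2 c).
Hypothesis interface_agree :
  forall c, proper c -> forall i, c (phi1 (iota1 i)) = c (phi2 (iota2 i)).
Hypothesis glue : forall c1 c2, proper c1 -> proper c2 ->
  (forall i, c1 (iota1 i) = c2 (iota2 i)) ->
  exists c, [/\ proper c, pullback phi1 c = c1 & pullback phi2 c = c2].
Hypothesis phi_cover : forall e, (exists e1, e = phi1 e1) \/ (exists e2, e = phi2 e2).
Hypothesis iota1_adjacent : pairwise_adjacent iota1.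
Hypothesis iota2_adjacent : pairwise_adjacent iota2.

Lemma lift_kempe2 c y : proper c -> kempe_equiv (pullback phi2 c) y ->
  exists c', [/\ kempe_equiv c c', proper c', pullback phi2 c' = y &
     exists t, injective t /\ pullback phi1 c' = recolor t (pullback phi1 c)].
Proof.
have agree21 c' : proper c' -> forall i, c' (phi2 (iota2 i)) = c' (phi1 (iota1 i)).
  by move=> Pc' i; rewrite interface_agree.
have glue21 c2 c1 : proper c2 -> proper c1 -> (forall i, c2 (iota2 i) = c1 (iota1 i)) ->
    exists c', [/\ proper c', pullback phi2 c' = c2 & pullback phi1 c' = c1].
  move=> P2 P1 c21; have [c' [Pc' c'1 c'2]] := glue P1 P2 (fun i => esym (c21 i)).
  by exists c'.
have cover21 e : (exists e2, e = phi2 e2) \/ (exists e1, e = phi1 e1).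
  by case: (phi_cover e); [right | left].
exact: (lift_kempe pullback2_proper pullback1_proper agree21 glue21 cover21 iota2_adjacent).
Qed.

Lemma proper_interface_inj (H : mgraph) (io : I -> edge H) (c : coloring H) :
  pairwise_adjacent io -> proper c -> injective (c \o io).
Proof.
move=> io_adj Pc i j /= cij; apply/eqP/negP => /negP nij.
have /andP[nio aio] := io_adj i j nij.
by move: (properP c Pc _ _ nio aio); rewrite cij eqxx.
Qed.

(* Global colour swaps bring [c2] to agree with [c1] on the interface. *)
Lemma interface_align c1 c2 : proper c1 -> proper c2 -> exists c2',
  [/\ proper c2', kempe_equiv c2 c2' & forall i, c1 (iota1 i) = c2' (iota2 i)].
Proof.
move=> P1; have [n] := ubnP #|[set i | c1 (iota1 i) != c2 (iota2 i)]|.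
elim: n c2 => // n IHn c2 card_diff P2.
case: (pickP [pred i | c1 (iota1 i) != c2 (iota2 i)]) => [i /= c12i | c12]; last first.
  exists c2; split => // [|i]; first exact: kempe_refl.
  by move: (c12 i) => /negbFE/eqP.
set x := c2 (iota2 i); set y := c1 (iota1 i).
have nxy : x != y by rewrite eq_sym.
have P2' : proper (recolor (swap x y) c2) by apply: recolor_proper P2; exact: swap_inj.
have card_diff' :
    #|[set j | c1 (iota1 j) != recolor (swap x y) c2 (iota2 j)]| < n.
  move: card_diff; rewrite (cardsD1 i) inE c12i add1n ltnS; apply: leq_ltn_trans.
  apply/subset_leq_card/subsetP => j; rewrite !inE ffunE.
  have [-> | nji] /= := eqVneq j i; first by rewrite /x /y /swap !eqxx.
  have inj1 := proper_interface_inj iota1_adjacent P1.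
  have inj2 := proper_interface_inj iota2_adjacent P2.
  apply: contra => /eqP c12j; rewrite -c12j swap_id //.
    by rewrite c12j; apply: contra nji => /eqP /inj2 ->.
  by apply: contra nji => /eqP /inj1 ->.
have [c3 [P3 c2c3 c13]] := IHn _ card_diff' P2'.
by exists c3; split => //; apply: kempe_trans (recolor_swap_kempe nxy P2) c2c3.
Qed.

Lemma glue_kempe c1 c2 : proper c1 -> proper c2 -> exists c,
  [/\ proper c, kempe_equiv (pullback phi1 c) c1 & kempe_equiv (pullback phi2 c) c2].
Proof.
move=> P1 P2; have [c2' [P2' c2c2' c12']] := interface_align P1 P2.
have [c [Pc c1E c2E]] := glue P1 P2' c12'.
by exists c; rewrite c1E c2E kempe_refl kempe_sym.
Qed.

(* Lifting the G1-moves and then the G2-moves leaves a colour permutation on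
   the G1 side only; it fixes the interface colour at [i0], so it is a swap. *)
Lemma kempe_pullbacks c d : proper c -> proper d ->
  kempe_equiv (pullback phi1 c) (pullback phi1 d) ->
  kempe_equiv (pullback phi2 c) (pullback phi2 d) -> kempe_equiv c d.
Proof.
move=> Pc Pd cd1 cd2.
have [c' [cc' Pc' c'd1 _]] :=
  lift_kempe pullback1_proper pullback2_proper interface_agree glue phi_cover
             iota1_adjacent Pc cd1.
have c'd2 : kempe_equiv (pullback phi2 c') (pullback phi2 d).
  by apply: kempe_trans cd2; rewrite kempe_sym; apply: pullback_kempe.
have [c'' [c'c'' Pc'' c''d2 [r [r_inj c''r]]]] := lift_kempe2 Pc' c'd2.
apply: kempe_trans cc' (kempe_trans c'c'' _).
have c''1 e1 : c'' (phi1 e1) = r (d (phi1 e1)).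
  by have := congr1 (fun g : coloring G1 => g e1) c''r; rewrite c'd1 !ffunE.
have c''2 e2 : c'' (phi2 e2) = d (phi2 e2).
  by have := congr1 (fun g : coloring G2 => g e2) c''d2; rewrite !ffunE.
have r_fix : r (d (phi1 (iota1 i0))) = d (phi1 (iota1 i0)).
  by rewrite -c''1 interface_agree // c''2 interface_agree.
have [a [b [nab r_ab]]] := perm3_fix_swap r_inj r_fix.
apply: swap_or_id_kempe nab Pd _ Pc'' _ => e; rewrite swap_or_idC.
case: (phi_cover e) => [[e1 ->]|[e2 ->]]; first by rewrite c''1.
by rewrite c''2 swap_or_id_refl.
Qed.

Theorem Kprime_glue : Kprime G = Kprime G1 * Kprime G2.
Proof.
rewrite /Kprime -cardsX.
have -> : #|[set kempe_class c | c in [set c : coloring G | proper c]]| =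
    #|[set (kempe_class (pullback phi1 c), kempe_class (pullback phi2 c))
        | c in [set c : coloring G | proper c]]|.
  apply: card_imset_kernel => c d; rewrite !inE => Pc Pd; split.
    by move/kempe_classP => cd; congr pair; apply/kempe_classP; apply: pullback_kempe.
  by case=> /kempe_classP cd1 /kempe_classP cd2; apply/kempe_classP; apply: kempe_pullbacks.
apply: eq_card => -[C1 C2]; rewrite !inE /=; apply/imsetP/andP.
  case=> c; rewrite inE => Pc [-> ->]; split; apply/imsetP.
    by exists (pullback phi1 c); rewrite // inE pullback1_proper.
  by exists (pullback phi2 c); rewrite // inE pullback2_proper.
case=> /imsetP[c1 + ->] /imsetP[c2 + ->]; rewrite !inE => P1 P2.
have [c [Pc cc1 cc2]] := glue_kempe P1 P2.
by exists c; rewrite ?inE // (proj2 (kempe_classP _ _) cc1) (proj2 (kempe_classP _ _) cc2).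
Qed.

End Gluing.

(** * Splitting along edge cuts *)

Lemma proper_local (G : mgraph) (c : coloring G) :
  (forall p e f, e != f -> is_end e p -> is_end f p -> c e != c f) -> proper c.
Proof.
move=> Hc; apply/properP => e f nef /or4P[] /eqP E.
- by apply: (Hc (src e)); rewrite // /is_end ?E eqxx.
- by apply: (Hc (src e)); rewrite // /is_end ?E eqxx ?orbT.
- by apply: (Hc (tgt e)); rewrite // /is_end ?E eqxx ?orbT.
- by apply: (Hc (tgt e)); rewrite // /is_end ?E eqxx ?orbT.
Qed.

Section Crossing.
Variables (G : mgraph) (S : {set vert G}).

Lemma crossingC : crossing (~: S) = crossing S.
Proof. by apply/setP => e; rewrite !inE; case: (src e \in S); case: (tgt e \in S). Qed.

Lemma crossing_end e : e \in crossing S -> (src e \in S) || (tgt e \in S).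
Proof. by rewrite inE; case: (src e \in S); case: (tgt e \in S). Qed.

Lemma crossing_endC e : e \in crossing S -> (src e \in ~: S) || (tgt e \in ~: S).
Proof. by rewrite !inE; case: (src e \in S); case: (tgt e \in S). Qed.

Lemma crossing_not_inner e : e \in crossing S -> ~~ ((src e \in S) && (tgt e \in S)).
Proof. by rewrite inE; case: (src e \in S); case: (tgt e \in S). Qed.

Lemma crossing_end_uniq e u w : e \in crossing S ->
  is_end e u -> is_end e w -> u \in S -> w \in S -> u = w.
Proof.
rewrite inE /is_end => eS /orP[]/eqP <- /orP[]/eqP <- uS wS //.
- by move: eS; rewrite uS wS.
- by move: eS; rewrite uS wS.
Qed.

End Crossing.

Definition colorable_cubic (H : mgraph) : Prop := cubic H /\ three_edge_colorable H.

Section Split3.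
Variables (G : mgraph) (T : {set vert G}).
Local Notation G1 := (split3_graph T).

Definition split3_edge (x : edge G1) : edge G := val x.

Lemma split3_insub_eq (x y : vert G) :
  (insub x == insub y :> option {v | v \in T}) = (x == y) || (x \notin T) && (y \notin T).
Proof.
case: insubP => [u xT ux|xT]; case: insubP => [v yT vy|yT] /=.
- by rewrite (inj_eq (@Some_inj _)) -(inj_eq val_inj) ux vy xT orbF.
- by rewrite xT /= orbF; apply/esym/negbTE; apply: contraNneq yT => <-.
- by rewrite yT andbF orbF; apply/esym/negbTE; apply: contraNneq xT => ->.
- by rewrite xT yT orbT.
Qed.

Lemma split3_insub_eq_some (x : vert G) (v : {v | v \in T}) :
  (insub x == Some v :> option {v | v \in T}) = (x == val v).
Proof. by rewrite -{1}(valK v) split3_insub_eq (valP v) andbF orbF. Qed.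

Lemma split3_insub_eq_none (x : vert G) : (insub x == None :> option {v | v \in T}) = (x \notin T).
Proof. by case: insubP => [u -> _|->]. Qed.

Lemma split3_adjacent (x y : edge G1) : adjacent (val x) (val y) -> adjacent x y.
Proof. by rewrite /adjacent /= !split3_insub_eq => /or4P[] ->; rewrite ?orbT. Qed.

Lemma split3_crossing_adjacent (x y : edge G1) :
  val x \in crossing T -> val y \in crossing T -> adjacent x y.
Proof.
rewrite /adjacent /= !split3_insub_eq !inE.
by case: (src (val x) \in T); case: (tgt (val x) \in T);
   case: (src (val y) \in T); case: (tgt (val y) \in T) => //= *; rewrite ?orbT.
Qed.

Lemma split3_crossing (x : edge G1) :
  (src (val x) \notin T) || (tgt (val x) \notin T) -> val x \in crossing T.
Proof.
move: (valP x); rewrite inE /=.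
by case: (src (val x) \in T); case: (tgt (val x) \in T).
Qed.

Lemma split3_proper_local (c : coloring G) (c1 : coloring G1) :
  proper c1 -> pullback split3_edge c = c1 ->
  forall p e f, p \in T -> e != f -> is_end e p -> is_end f p -> c e != c f.
Proof.
move=> P1 c1E p e f pT nef ep fp.
have end_in g : is_end g p -> (src g \in T) || (tgt g \in T).
  by case/orP => /eqP ->; rewrite pT ?orbT.
have cE g (gp : is_end g p) : c g = c1 (Sub g (end_in g gp)).
  by rewrite -c1E ffunE.
rewrite (cE e ep) (cE f fp); apply: (properP _ P1).
  by rewrite -(inj_eq val_inj).
apply: split3_adjacent; rewrite /adjacent /=.
by case/orP: ep => /eqP ->; case/orP: fp => /eqP ->; rewrite eqxx ?orbT.
Qed.

Hypothesis G_cubic : cubic G.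
Hypothesis cut3 : #|crossing T| = 3.

(* Two edges of G1 meeting only at the contracted vertex are crossing edges,
   which a proper colouring of a cubic graph colours differently. *)
Lemma split3_pullback_proper (c : coloring G) : proper c -> proper (pullback split3_edge c).
Proof.
move=> Pc; apply/properP => x y nxy axy; rewrite !ffunE.
have nv : val x != val y by rewrite (inj_eq val_inj).
have [/(properP c Pc _ _ nv) //|naxy] := boolP (adjacent (val x) (val y)).
have [xT yT] : val x \in crossing T /\ val y \in crossing T.
  move: axy naxy; rewrite /adjacent /= !split3_insub_eq.
  case/or4P => /orP[E|/andP[h1 h2]] naxy';
    first [by rewrite E ?orbT in naxy' | by split; apply: split3_crossing; rewrite ?h1 ?h2 ?orbT].
by rewrite /split3_edge (cut3_color_inj G_cubic Pc cut3 xT yT nv).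
Qed.

Lemma split3_cubic : cubic G1.
Proof.
have [loopless_G deg3] := G_cubic.
split.
  move=> x; rewrite /= split3_insub_eq negb_or (loopless_G (val x)) /=.
  by move: (valP x) => /=; case: (_ \in T); case: (_ \in T).
case => [v|].
  rewrite -(deg3 (val v)) -(card_imset _ val_inj); apply: eq_card => e.
  apply/imsetP/idP => [[x] | ]; first by rewrite !inE /= !split3_insub_eq_some => xv ->.
  rewrite inE => ev.
  have eT : (src e \in T) || (tgt e \in T).
    by case/orP: ev => /eqP ->; rewrite (valP v) ?orbT.
  by exists (Sub e eT : edge G1); rewrite // inE /= !split3_insub_eq_some.
rewrite -cut3 -(card_imset _ val_inj); apply: eq_card => e.
apply/imsetP/idP => [[x] | eT].
  by rewrite inE /= !split3_insub_eq_none => xT ->; apply: split3_crossing.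
exists (Sub e (crossing_end eT) : edge G1) => //.
by rewrite inE /= !split3_insub_eq_none; move: eT; rewrite inE; case: (_ \in T); case: (_ \in T).
Qed.

End Split3.

Section Cut3.
Variables (G : mgraph) (S : {set vert G}).
Hypotheses (G_cubic : cubic G) (cut3 : #|crossing S| = 3).
Local Notation G1 := (split3_graph S).
Local Notation G2 := (split3_graph (~: S)).

Let cut3C : #|crossing (~: S)| = 3. Proof. by rewrite crossingC. Qed.

Definition cut3_edge := {e : edge G | e \in crossing S}.

Definition cut3_iota1 (i : cut3_edge) : edge G1 := Sub (val i) (crossing_end (valP i)).

Definition cut3_iota2 (i : cut3_edge) : edge G2 :=
  Sub (val i) (crossing_endC (valP i)).

(* The default [ord0] is never used: every edge has an end in S or in ~: S. *)
Definition glue3 (c1 : coloring G1) (c2 : coloring G2) : coloring G :=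
  [ffun e => if insub e is Some x then c1 x
             else if insub e is Some y then c2 y else ord0].

Lemma glue3P c1 c2 : proper c1 -> proper c2 ->
  (forall i, c1 (cut3_iota1 i) = c2 (cut3_iota2 i)) ->
  exists c, [/\ proper c, pullback (@split3_edge _ S) c = c1 &
                          pullback (@split3_edge _ (~: S)) c = c2].
Proof.
move=> P1 P2 c12.
have c1E : pullback (@split3_edge _ S) (glue3 c1 c2) = c1.
  by apply/ffunP => x; rewrite !ffunE valK.
have c2E : pullback (@split3_edge _ (~: S)) (glue3 c1 c2) = c2.
  apply/ffunP => y; rewrite !ffunE /split3_edge.
  case: insubP => [x yS1 xy|_]; last by rewrite valK.
  have yS : val y \in crossing S.
    by rewrite -crossingC; apply: split3_crossing; rewrite !inE !negbK.
  have -> : x = cut3_iota1 (Sub (val y) yS) by apply: val_inj.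
  by rewrite c12; congr (c2 _); apply: val_inj.
exists (glue3 c1 c2); split => //; apply: proper_local => p e f nef ep fp.
have [pS | pS] := boolP (p \in S); first exact: (split3_proper_local P1 c1E pS nef ep fp).
by apply: (split3_proper_local P2 c2E _ nef ep fp); rewrite inE.
Qed.

Lemma Kprime_cut3 : Kprime G = Kprime G1 * Kprime G2.
Proof.
have [e0 e0S] : exists e, e \in crossing S.
  by apply/card_gt0P; rewrite cut3.
apply: (@Kprime_glue _ _ _ _ _ _ cut3_iota1 cut3_iota2 (Sub e0 e0S)).
- exact: split3_pullback_proper G_cubic cut3.
- exact: split3_pullback_proper G_cubic cut3C.
- by [].
- exact: glue3P.
- move=> e; have [eS | eS] := boolP ((src e \in S) || (tgt e \in S)).
    by left; exists (Sub e eS).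
  have eSC : (src e \in ~: S) || (tgt e \in ~: S).
    by rewrite !inE; move: eS; case: (src e \in S).
  by right; exists (Sub e eSC).
- move=> i j nij; rewrite -(inj_eq val_inj) /= (inj_eq val_inj) nij.
  by rewrite split3_crossing_adjacent ?(valP i) ?(valP j).
- move=> i j nij; rewrite -(inj_eq val_inj) /= (inj_eq val_inj) nij.
  by rewrite split3_crossing_adjacent // crossingC ?(valP i) ?(valP j).
Qed.

Lemma cut3_sides_colorable :
  three_edge_colorable G -> colorable_cubic G1 /\ colorable_cubic G2.
Proof.
case=> c0 Pc0; split; split.
- exact: split3_cubic G_cubic cut3.
- exists (pullback (@split3_edge _ S) c0).
  exact: (split3_pullback_proper G_cubic cut3 Pc0).
- exact: split3_cubic G_cubic cut3C.
- exists (pullback (@split3_edge _ (~: S)) c0).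
  exact: (split3_pullback_proper G_cubic cut3C Pc0).
Qed.

End Cut3.

Section Split2.
Variables (G : mgraph) (T : {set vert G}) (e1 e2 : edge G) (x1 x2 : {x | x \in T}).
Hypotheses (ne12 : e1 != e2) (cutT : crossing T = [set e1; e2]).
Hypotheses (e1x1 : is_end e1 (val x1)) (e2x2 : is_end e2 (val x2)) (nx12 : x1 != x2).
Local Notation G1 := (split2_graph x1 x2).

Definition split2_edge (e0 : edge G) (x : edge G1) : edge G :=
  if x is Some a then val a else e0.

Definition split2_lift (e : edge G) : edge G1 := insub e.

Let e1T : e1 \in crossing T. Proof. by rewrite cutT !inE eqxx. Qed.
Let e2T : e2 \in crossing T. Proof. by rewrite cutT !inE eqxx orbT. Qed.

Lemma split2_lift_crossing e : e \in crossing T -> split2_lift e = None.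
Proof. by move/crossing_not_inner => e_out; rewrite /split2_lift insubN. Qed.

Lemma crossing_split2 e p : p \in T -> is_end e p -> ~~ ((src e \in T) && (tgt e \in T)) ->
  (e = e1 /\ p = val x1) \/ (e = e2 /\ p = val x2).
Proof.
move=> pT ep e_out.
have : e \in crossing T.
  by move: ep e_out; rewrite inE /is_end => /orP[]/eqP ->; rewrite pT //=; case: (_ \in T).
rewrite {1}cutT !inE => /orP[]/eqP ee; subst e; [left | right]; split => //.
- exact: crossing_end_uniq e1T ep e1x1 pT (valP x1).
- exact: crossing_end_uniq e2T ep e2x2 pT (valP x2).
Qed.

Lemma split2_lift_incident (v : vert G1) e :
  is_end e (val v) -> is_end (split2_lift e) v.
Proof.
rewrite /split2_lift; case: insubP => [a _ <-|e_out] ev /=.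
  by rewrite /is_end -!(inj_eq val_inj).
have [[_ /val_inj ->]|[_ /val_inj ->]] := crossing_split2 (valP v) ev e_out.
  by rewrite /is_end eqxx.
by rewrite /is_end eqxx orbT.
Qed.

Lemma split2_lift_inj p e f : p \in T -> is_end e p -> is_end f p ->
  split2_lift e = split2_lift f -> e = f.
Proof.
rewrite /split2_lift => pT.
case: insubP => [a _ <-|e_out]; case: insubP => [b _ <-|f_out] //= ep fp.
  by case=> ->.
have [[-> px1]|[-> px2]] := crossing_split2 pT ep e_out;
have [[-> qx1]|[-> qx2]] := crossing_split2 pT fp f_out => // _.
- by move: nx12; rewrite -(inj_eq val_inj) -px1 -qx2 eqxx.
- by move: nx12; rewrite -(inj_eq val_inj) -qx1 -px2 eqxx.
Qed.

Lemma split2_proper_local (c : coloring G) (c1 : coloring G1) : proper c1 ->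
  (forall e, (src e \in T) || (tgt e \in T) -> c e = c1 (split2_lift e)) ->
  forall p e f, p \in T -> e != f -> is_end e p -> is_end f p -> c e != c f.
Proof.
move=> P1 cE p e f pT nef ep fp.
have end_in g : is_end g p -> (src g \in T) || (tgt g \in T).
  by case/orP => /eqP ->; rewrite pT ?orbT.
rewrite (cE e (end_in e ep)) (cE f (end_in f fp)); apply: (properP _ P1).
  by apply: contra nef => /eqP /(split2_lift_inj pT ep fp) ->.
have ep' : is_end e (val (Sub p pT : vert G1)) by rewrite SubK.
have fp' : is_end f (val (Sub p pT : vert G1)) by rewrite SubK.
move: (split2_lift_incident ep') (split2_lift_incident fp'); rewrite /adjacent /is_end.
by case/orP => /eqP ->; case/orP => /eqP ->; rewrite eqxx ?orbT.
Qed.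

Lemma split2_cubic : cubic G -> cubic G1.
Proof.
case=> loopless_G deg3; split => [[a|] //=|v].
  by apply: contra (loopless_G (val a)) => /eqP/(congr1 val) /= ->.
rewrite -(deg3 (val v)) -(card_in_imset (f := split2_lift)); last first.
  by move=> e f; rewrite !inE => ev fv; apply: split2_lift_inj (valP v) ev fv.
apply: eq_card => x; apply/idP/imsetP => [|[e ev ->]]; last first.
  by move: ev; rewrite !inE => /split2_lift_incident.
rewrite inE; case: x => [a|] xv.
  exists (val a); last by rewrite /split2_lift valK.
  by rewrite inE; move: xv; rewrite /= -!(inj_eq val_inj).
have [vx1|vx2] : v = x1 \/ v = x2 by case/orP: xv => /eqP <-; [left | right].
  by exists e1; rewrite ?inE ?vx1 // split2_lift_crossing.
by exists e2; rewrite ?inE ?vx2 // split2_lift_crossing.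
Qed.

Lemma split2_pullback_proper (c : coloring G) e0 : cubic G -> proper c ->
  e0 \in [set e1; e2] -> proper (pullback (split2_edge e0) c).
Proof.
move=> G_cubic Pc e0E.
have c12 := cut2_color_eq G_cubic Pc cutT ne12.
have inner_neq (b : {e | (src e \in T) && (tgt e \in T)}) i : i \in crossing T -> i != val b.
  by move=> iT; apply: contraNneq (crossing_not_inner iT) => ->; apply: (valP b).
have off_cut (b : {e | (src e \in T) && (tgt e \in T)}) :
    adjacent (None : edge G1) (Some b) -> c e0 != c (val b).
  have via (x : vert G1) i : i \in [set e1; e2] -> is_end i (val x) ->
      (src (Some b : edge G1) == x) || (tgt (Some b : edge G1) == x) -> c e0 != c (val b).
    move=> iE ix bx; have -> : c e0 = c i.
      by case/set2P: e0E => ->; case/set2P: iE => ->.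
    apply: (properP c Pc); first by apply: inner_neq; case/set2P: iE => ->.
    by apply: adjacent_is_end ix _; case/orP: bx => /eqP <-; rewrite /is_end eqxx ?orbT.
  rewrite adjacentC => /or4P[] sbx;
    [apply: (via x1 e1) | apply: (via x2 e2) | apply: (via x1 e1) | apply: (via x2 e2)];
    by rewrite ?inE ?eqxx ?sbx ?orbT.
apply/properP => -[a|] [b|] //= nab; rewrite !ffunE /=.
- move=> Aab; apply: (properP c Pc); first by apply: contra nab => /eqP /val_inj ->.
  by move: Aab; rewrite /adjacent /= -!(inj_eq val_inj).
- by rewrite adjacentC eq_sym; apply: off_cut.
- exact: off_cut.
Qed.

End Split2.

Lemma cut2_ends_neq (G : mgraph) (T : {set vert G}) e1 e2 (x1 x2 : {x | x \in T})
    (c : coloring G) :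
  cubic G -> proper c -> e1 != e2 -> crossing T = [set e1; e2] ->
  is_end e1 (val x1) -> is_end e2 (val x2) -> x1 != x2.
Proof.
move=> G_cubic Pc ne12 cutT e1x1 e2x2; apply/eqP => x12.
apply/eqP: (cut2_color_eq G_cubic Pc cutT ne12); apply: (properP c Pc _ _ ne12).
by apply: adjacent_is_end e1x1 _; rewrite x12.
Qed.

Section Cut2.
Variables (G : mgraph) (S : {set vert G}) (e1 e2 : edge G).
Variables (x1 x2 : {x | x \in S}) (y1 y2 : {x | x \in ~: S}).
Hypotheses (G_cubic : cubic G) (ne12 : e1 != e2) (cutS : crossing S = [set e1; e2]).
Hypotheses (e1x1 : is_end e1 (val x1)) (e2x2 : is_end e2 (val x2)).
Hypotheses (e1y1 : is_end e1 (val y1)) (e2y2 : is_end e2 (val y2)).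
Variable c0 : coloring G.
Hypothesis Pc0 : proper c0.
Local Notation G1 := (split2_graph x1 x2).
Local Notation G2 := (split2_graph y1 y2).

Let cutSC : crossing (~: S) = [set e1; e2]. Proof. by rewrite crossingC. Qed.
Let e1S : e1 \in crossing S. Proof. by rewrite cutS set21. Qed.
Let e2S : e2 \in crossing S. Proof. by rewrite cutS set22. Qed.
Let nx12 : x1 != x2. Proof. exact: cut2_ends_neq G_cubic Pc0 ne12 cutS e1x1 e2x2. Qed.
Let ny12 : y1 != y2. Proof. exact: cut2_ends_neq G_cubic Pc0 ne12 cutSC e1y1 e2y2. Qed.

Definition glue2 (c1 : coloring G1) (c2 : coloring G2) : coloring G :=
  [ffun e => if (src e \in S) || (tgt e \in S) then c1 (split2_lift x1 x2 e)
             else c2 (split2_lift y1 y2 e)].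

Lemma glue2P (c1 : coloring G1) (c2 : coloring G2) : proper c1 -> proper c2 -> c1 None = c2 None ->
  exists c, [/\ proper c, pullback (split2_edge e1) c = c1 & pullback (split2_edge e2) c = c2].
Proof.
move=> P1 P2 c12.
have crossing_lifts e : e \in crossing S ->
    split2_lift x1 x2 e = None /\ split2_lift y1 y2 e = None.
  move=> eS; split; first exact: split2_lift_crossing.
  by apply: split2_lift_crossing; rewrite crossingC.
have [e1_lift1 _] := crossing_lifts e1 e1S.
have [_ e2_lift2] := crossing_lifts e2 e2S.
have c1E e : (src e \in S) || (tgt e \in S) -> glue2 c1 c2 e = c1 (split2_lift x1 x2 e).
  by rewrite ffunE => ->.
have c2E e : (src e \in ~: S) || (tgt e \in ~: S) -> glue2 c1 c2 e = c2 (split2_lift y1 y2 e).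
  rewrite ffunE; case: ifP => // eS eSC.
  have eX : e \in crossing S by move: eS eSC; rewrite !inE; do 2 case: (_ \in S).
  by have [-> ->] := crossing_lifts e eX.
exists (glue2 c1 c2); split.
- apply: proper_local => p e f nef ep fp.
  have [pS | pS] := boolP (p \in S).
    exact: (split2_proper_local cutS e1x1 e2x2 nx12 P1 c1E pS nef ep fp).
  by apply: (split2_proper_local cutSC e1y1 e2y2 ny12 P2 c2E _ nef ep fp); rewrite inE.
- apply/ffunP => -[a|]; rewrite ffunE /=.
    by rewrite c1E /split2_lift ?valK // (andP (valP a)).1.
  by rewrite c1E ?e1_lift1 ?crossing_end.
- apply/ffunP => -[b|]; rewrite ffunE /=.
    by rewrite c2E /split2_lift ?valK // (andP (valP b)).1.
  by rewrite c2E ?e2_lift2 ?crossing_endC.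
Qed.

Lemma Kprime_cut2 : Kprime G = Kprime G1 * Kprime G2.
Proof.
apply: (@Kprime_glue _ G1 G2 (split2_edge e1) (split2_edge e2) _ (fun=> None) (fun=> None) tt).
- move=> c Pc; exact: (split2_pullback_proper ne12 cutS e1x1 e2x2 G_cubic Pc (set21 _ _)).
- move=> c Pc; exact: (split2_pullback_proper ne12 cutSC e1y1 e2y2 G_cubic Pc (set22 _ _)).
- move=> c Pc _; exact: (cut2_color_eq G_cubic Pc cutS ne12).
- by move=> c1 c2 P1 P2 /(_ tt); apply: glue2P.
- move=> e; have [eS | eS] := boolP ((src e \in S) && (tgt e \in S)).
    by left; exists (Some (Sub e eS)).
  have [eSC | eSC] := boolP ((src e \in ~: S) && (tgt e \in ~: S)).
    by right; exists (Some (Sub e eSC)).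
  have : e \in crossing S by move: eS eSC; rewrite !inE; do 2 case: (_ \in S).
  by rewrite cutS => /set2P[] ->; [left | right]; exists None.
- by case; case.
- by case; case.
Qed.

Lemma cut2_sides_colorable : colorable_cubic G1 /\ colorable_cubic G2.
Proof.
split; split.
- exact: split2_cubic cutS e1x1 e2x2 nx12 G_cubic.
- exists (pullback (split2_edge e1) c0).
  exact: (split2_pullback_proper ne12 cutS e1x1 e2x2 G_cubic Pc0 (set21 _ _)).
- exact: split2_cubic cutSC e1y1 e2y2 ny12 G_cubic.
- exists (pullback (split2_edge e2) c0).
  exact: (split2_pullback_proper ne12 cutSC e1y1 e2y2 G_cubic Pc0 (set22 _ _)).
Qed.

End Cut2.

(** * Decompositions *)

Lemma nontrivial_split_Kprime (H H1 H2 : mgraph) :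
  colorable_cubic H -> nontrivial_split H H1 H2 ->
  [/\ Kprime H = Kprime H1 * Kprime H2, colorable_cubic H1 & colorable_cubic H2].
Proof.
move=> [H_cubic [c0 Pc0]] [[cut2 | cut3] _].
  have [S [e1 [e2 [x1 [x2 [y1 [y2 [ne12 cutS /andP[e1x1 e2x2] /andP[e1y1 e2y2] [-> ->]]]]]]]]]
    := cut2.
  have [col1 col2] := cut2_sides_colorable H_cubic ne12 cutS e1x1 e2x2 e1y1 e2y2 Pc0.
  by split => //; apply: (Kprime_cut2 H_cubic ne12 cutS e1x1 e2x2 e1y1 e2y2 Pc0).
have [S [cutS [-> ->]]] := cut3.
have [col1 col2] := cut3_sides_colorable H_cubic cutS (ex_intro _ c0 Pc0).
by split => //; apply: Kprime_cut3.
Qed.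

Theorem theorem13 (G : mgraph) (L : seq mgraph) :
  cubic G -> three_edge_colorable G -> decomposition G L ->
  Kprime G = (\prod_(H <- L) Kprime H)%N.
Proof.
move=> G_cubic G_col decL.
suff [] : (forall H, List.In H L -> colorable_cubic H) /\
          Kprime G = (\prod_(H <- L) Kprime H)%N by [].
elim: decL => [|L1 L2 H H1 H2 _ [IH_col IH_K] split12].
  by split; [move=> H [<-|[]] | rewrite big_seq1].
have H_col : colorable_cubic H by apply: IH_col; apply: List.in_or_app; right; left.
have [K12 col1 col2] := nontrivial_split_Kprime H_col split12.
split; last by rewrite IH_K !big_cat !big_cons /= K12 -mulnA.
move=> H' /(List.in_app_or L1) [inL1 | [<- | [<- | inL2]]] //.
- by apply: IH_col; apply: List.in_or_app; left.
- by apply: IH_col; apply: List.in_or_app; right; right.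
Qed.
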